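(* Let $n\geq2$ be finite and let $\mathfrak A\in SA_n$. If $\mathfrak A$ is atomic and $\sum_{x\in\mathrm{At}\mathfrak A}s_\tau x=1$ for every $\tau\in{}^nn$, then $\mathfrak A$ is completely representable. Conversely, if $\mathfrak A$ is completely representable, then $\mathfrak A$ is atomic and $\sum_{x\in\mathrm{At}\mathfrak A}s_\tau x=1$ for every $\tau\in{}^nn$.
   Context: $SA_n=\mathbf{Mod}(\Sigma'_n)$, where $\Sigma'_n$ (signature $\wedge,-,s^i_j,s_{ij}$, $i\neq j<n$) consists of the Boolean axioms, equations saying each $s^i_j,s_{ij}$ is a Boolean endomorphism, and $t_1(x)=t_2(x)$ for all words $t_1,t_2$ with $\hat t_1=\hat t_2$ in ${}^nn$; here $\hat{}$ sends the empty word to $Id_n$, $(s_{ij}t)^{\hat{}}=[i,j]\circ\hat t$, $(s^i_jt)^{\hat{}}=[i/j]\circ\hat t$, with $[i,j]$ the transposition and $[i/j]$ the map sending $i$ to $j$ and fixing the rest. For $\tau\in{}^nn$, $s_\tau$ is the term operation $t$ for any word $t$ with $\hat t=\tau$. A set $D\subseteq{}^nU$ is dipermutable if $s\circ[i/j]\in D$ and $s\circ[i,j]\in D$ for all $s\in D$, $i\neq j$; $\wp(D)$ has operations $\cap$, complement relative to $D$, $S^i_j(X)=\{q\in D:q\circ[i/j]\in X\}$, $S_{ij}(X)=\{q\in D:q\circ[i,j]\in X\}$. $\mathfrak A$ is completely representable if there is an injective homomorphism $f:\mathfrak A\to\wp(D)$, $D$ dipermutable, with $f(\prod Y)=\bigcap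 f[Y]$ whenever $\prod Y$ exists. $\mathrm{At}\mathfrak A$ is the set of atoms. *)

(* Boolean algebras are complemented distributive lattices
   with top and bottom ([ctbDistrLatticeType]) from mathcomp-order. *)
From HB Require Import structures.
From mathcomp Require Import all_boot all_order.
From Stdlib Require Import ClassicalEpsilon.

Set Implicit Arguments.
Unset Strict Implicit.
Unset Printing Implicit Defensive.

Import Order.LTheory Order.CTheory.
Local Open Scope order_scope.

Section SA.
Variable n : nat.

Definition repl (i j : 'I_n) : 'I_n -> 'I_n :=
  fun k => if k == i then j else k.
Definition transp (i j : 'I_n) : 'I_n -> 'I_n :=
  fun k => if k == i then j else if k == j then i else k.

(* A letter is (b, i, j): b = true encodes s_{ij}, b = false encodes s^i_j. *)
Definition letter := (bool * 'I_n * 'I_n)%type.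
Definition word := seq letter.

Definition wf_word (t : word) : Prop :=
  forall l, l \in t -> l.1.2 != l.2.

Definition letter_map (l : letter) : 'I_n -> 'I_n :=
  let: (b, i, j) := l in if b then transp i j else repl i j.

Fixpoint hat (t : word) : 'I_n -> 'I_n :=
  match t with
  | [::] => id
  | l :: t' => fun k => letter_map l (hat t' k)
  end.

Variables (d : Order.disp_t) (T : ctbDistrLatticeType d).
Variables (sub : 'I_n -> 'I_n -> T -> T)
          (swp : 'I_n -> 'I_n -> T -> T).

Definition letter_op (l : letter) : T -> T :=
  let: (b, i, j) := l in if b then swp i j else sub i j.

Fixpoint eval_word (t : word) (x : T) : T :=
  match t with
  | [::] => x
  | l :: t' => letter_op l (eval_word t' x)
  end.

Definition bool_endo (f : T -> T) : Prop :=
  (forall x y, f (x `&` y) = f x `&` f y) /\ (forall x, f (~` x) = ~` f x).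

(* Membership in SA_n = Mod(Sigma'_n) (Boolean axioms are given by T). *)
Definition SA_axioms : Prop :=
  (forall i j : 'I_n, i != j -> bool_endo (sub i j) /\ bool_endo (swp i j)) /\
  (forall t1 t2 : word, wf_word t1 -> wf_word t2 -> hat t1 =1 hat t2 ->
     forall x, eval_word t1 x = eval_word t2 x).

Definition word_for (tau : 'I_n -> 'I_n) : word :=
  epsilon (inhabits [::]) (fun t => wf_word t /\ hat t =1 tau).
Definition s_tau (tau : 'I_n -> 'I_n) (x : T) : T := eval_word (word_for tau) x.

Definition is_lub (X : T -> Prop) (a : T) : Prop :=
  (forall x, X x -> x <= a) /\ (forall b, (forall x, X x -> x <= b) -> a <= b).
Definition is_glb (X : T -> Prop) (a : T) : Prop :=
  (forall x, X x -> a <= x) /\ (forall b, (forall x, X x -> b <= x) -> b <= a).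

Definition atom (x : T) : Prop :=
  x != \bot /\ forall y, y <= x -> y = \bot \/ y = x.
Definition atomic : Prop :=
  forall x, x != \bot -> exists a, atom a /\ a <= x.

Definition atoms_sum_one (tau : 'I_n -> 'I_n) : Prop :=
  is_lub (fun y => exists x, atom x /\ y = s_tau tau x) \top.

Definition dipermutable (U : Type) (D : ('I_n -> U) -> Prop) : Prop :=
  forall s, D s -> forall i j : 'I_n, i != j ->
    D (fun k => s (repl i j k)) /\ D (fun k => s (transp i j k)).

(* f : A -> wp(D) is an injective homomorphism preserving all existing meets *)
Definition complete_rep (U : Type) (D : ('I_n -> U) -> Prop)
  (f : T -> ('I_n -> U) -> Prop) : Prop :=
  (forall x q, f x q -> D q) /\
  (forall x y q, f (x `&` y) q <-> f x q /\ f y q) /\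
  (forall x q, f (~` x) q <-> D q /\ ~ f x q) /\
  (forall i j : 'I_n, i != j -> forall x q,
      f (sub i j x) q <-> D q /\ f x (fun k => q (repl i j k))) /\
  (forall i j : 'I_n, i != j -> forall x q,
      f (swp i j x) q <-> D q /\ f x (fun k => q (transp i j k))) /\
  (forall x y, (forall q, f x q <-> f y q) -> x = y) /\
  (forall (Y : T -> Prop) p, is_glb Y p ->
      forall q, f p q <-> D q /\ (forall y, Y y -> f y q)).

Definition completely_representable : Prop :=
  exists (U : Type) (D : ('I_n -> U) -> Prop) (f : T -> ('I_n -> U) -> Prop),
    dipermutable D /\ complete_rep D f.

End SA.

From mathcomp Require Import all_boot all_order all_fingroup.
From mathcomp Require Import zify.
From Stdlib Require Import ClassicalEpsilon.

Set Implicit Arguments.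
Unset Strict Implicit.
Unset Printing Implicit Defensive.

(* 1. Every map tau : ^n n is the value [hat t] of a well-formed word t:
      permutations are products of transpositions, and a non-injective map
      is [i/j] composed with a map of strictly larger image.  Hence s_tau is
      a composite of the basic operations, so it is a Boolean endomorphism
      and s_tau (s_l x) = s_(tau o l) x for every letter l.
   2. Two facts about Boolean algebras: if a Boolean endomorphism g has
      sum_{b atom} g b = 1, every atom a has an atom b with a <= g x <-> b <= x;
      and a complete ultrafilter contains an atom.
   3. Forward direction: fix an index i0, let D be the maps q with constant
      first component an atom a, and put q in f x iff a <= s_tau x where tau
      is the second component of q.  Atomicity gives injectivity of f, and
      fact 2(a) gives preservation of all existing meets.
   4. Converse: for q in D, {x | q in f x} is a complete ultrafilter, so it
      contains an atom (2(b)); this yields atomicity, and applied to the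
      point q o tau it yields sum_{x atom} s_tau x = 1. *)

Section Words.
Variable n : nat.

Lemma hat_cat (t1 t2 : word n) k : hat (t1 ++ t2) k = hat t1 (hat t2 k).
Proof. by elim: t1 => //= l t ->. Qed.

Lemma wf_cat (t1 t2 : word n) : wf_word t1 -> wf_word t2 -> wf_word (t1 ++ t2).
Proof. by move=> h1 h2 l; rewrite mem_cat => /orP[/h1|/h2]. Qed.

Lemma wf_cons (l : letter n) t : wf_word (l :: t) <-> l.1.2 != l.2 /\ wf_word t.
Proof.
split=> [hw|[hl hw] l']; last by rewrite inE => /orP[/eqP ->|/hw].
by split=> [|l' hl']; apply: hw; rewrite inE ?eqxx ?hl' ?orbT.
Qed.

Definition realizable (tau : 'I_n -> 'I_n) : Prop :=
  exists t : word n, wf_word t /\ hat t =1 tau.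

Lemma realizable_ext (tau1 tau2 : 'I_n -> 'I_n) :
  tau1 =1 tau2 -> realizable tau1 -> realizable tau2.
Proof. by move=> e [t [hw hh]]; exists t; split=> // k; rewrite hh e. Qed.

Lemma realizable_tperm_prod (ts : seq ('I_n * 'I_n)) :
  all dpair ts -> realizable (\prod_(t <- ts) tperm t.1 t.2)%g.
Proof.
elim: ts => [|[a b] ts IH] /=.
  by move=> _; exists [::]; split=> // k; rewrite big_nil perm1.
move=> /andP[hab /IH [w [hw hh]]].
exists (w ++ [:: (true, a, b)]); split.
  by apply: wf_cat => // l; rewrite inE => /eqP ->.
move=> k; rewrite hat_cat big_cons permM hh /=; congr (_ _).
rewrite /transp; case: tpermP => [->|->|/eqP h1 /eqP h2]; rewrite ?eqxx //.
  by rewrite eq_sym (negbTE hab).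
by rewrite (negbTE h1) (negbTE h2).
Qed.

Lemma realizable_injective (tau : 'I_n -> 'I_n) : injective tau -> realizable tau.
Proof.
move=> inj; have [ts hp hd] := prod_tpermP (perm inj).
by apply: realizable_ext (realizable_tperm_prod hd) => k; rewrite -hp permE.
Qed.

Lemma realizable_repl_comp (v w : 'I_n) (tau : 'I_n -> 'I_n) :
  v != w -> realizable tau -> realizable (repl v w \o tau).
Proof.
move=> hvw [t [hw hh]]; exists ((false, v, w) :: t); split.
  exact/wf_cons.
by move=> k /=; rewrite hh.
Qed.

Lemma noninjective_image_small (tau : 'I_n -> 'I_n) :
  ~~ injectiveb tau -> #|codom tau| < n.
Proof.
move=> hni; have := max_card (mem (codom tau)).
rewrite card_ord leq_eqVlt => /orP[/eqP hc|//].
case/negP: hni; apply/injectiveP => x y.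
have /image_injP hi : #|image tau 'I_n| == #|'I_n| by rewrite card_ord hc.
exact: hi.
Qed.

Lemma noninjective_step (tau : 'I_n -> 'I_n) : ~~ injectiveb tau ->
  exists v w (tau' : 'I_n -> 'I_n),
    [/\ v != w, #|codom tau| < #|codom tau'| & tau =1 repl v w \o tau'].
Proof.
move=> hni; have [i [j hij heq]] := injectivePn _ hni.
have [v _ hv] : exists2 v, v \in 'I_n & v \notin codom tau.
  apply/subsetPn; apply: contraL (noninjective_image_small hni).
  by move=> /subset_leq_card; rewrite card_ord -leqNgt.
pose tau' k := if k == i then v else tau k.
have hvi : v != tau i by apply: contra hv => /eqP ->; exact: codom_f.
exists v, (tau i), tau'; split=> //.
  apply: proper_card; apply/properP; split.
    apply/subsetP => _ /codomP [k ->]; apply/codomP.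
    case: (eqVneq k i) => [->|hk].
      by exists j; rewrite /tau' eq_sym (negbTE hij).
    by exists k; rewrite /tau' (negbTE hk).
  by exists v => //; apply/codomP; exists i; rewrite /tau' eqxx.
move=> k; rewrite /= /tau' /repl.
case: (eqVneq k i) => [->|_]; first by rewrite eqxx.
by case: eqP => // hk; case/negP: hv; rewrite -hk codom_f.
Qed.

Lemma all_realizable (tau : 'I_n -> 'I_n) : realizable tau.
Proof.
have [m hm] := ubnP (n - #|codom tau|); elim: m tau hm => // m IH tau hm.
have [/injectiveP|hni] := boolP (injectiveb tau); first exact: realizable_injective.
have [v [w [tau' [hvw hlt heq]]]] := noninjective_step hni.
apply: realizable_ext (realizable_repl_comp hvw (IH tau' _)) => [k|].
  by rewrite heq.
have := max_card (mem (codom tau')); rewrite card_ord.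
by move: hm hlt; rewrite !cardE; lia.
Qed.

Lemma word_for_spec (tau : 'I_n -> 'I_n) :
  wf_word (word_for tau) /\ hat (word_for tau) =1 tau.
Proof. exact: (epsilon_spec _ _ (all_realizable tau)). Qed.

End Words.

Import Order.LTheory Order.CTheory.

Section BooleanAlgebra.
Local Open Scope order_scope.
Variables (d : Order.disp_t) (T : ctbDistrLatticeType d).

Lemma bool_endo_mono (g : T -> T) : bool_endo g -> {homo g : x y / x <= y}.
Proof. by move=> [gI _] x y /meet_idPl <-; rewrite gI leIr. Qed.

Lemma atomC (a y : T) : atom a -> (a <= ~` y) = ~~ (a <= y).
Proof.
move=> [ha0 ha]; apply/idP/idP => [h1|h].
  apply/negP => h2; case/negP: ha0.
  by rewrite -lex0 -(meetxC y) lexI h1 h2.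
rewrite -disj_leC; case: (ha (a `&` y) (leIl _ _)) => [->//|e].
by case/negP: h; rewrite -e leIr.
Qed.

Lemma atom_preimage (g : T -> T) (a : T) : bool_endo g ->
  is_lub (fun y => exists x, atom x /\ y = g x) \top -> atom a ->
  exists b, atom b /\ forall x, a <= g x <-> b <= x.
Proof.
move=> hg [_ hlub] ha.
have [b [hb hab]] : exists b, atom b /\ a <= g b.
  apply: NNPP => hne; have : \top <= ~` a.
    apply: hlub => _ [b [hb ->]]; rewrite -lexC atomC //.
    by apply/negP => hab; apply: hne; exists b.
  by move=> /(le_trans (lex1 a)); rewrite atomC // lexx.
exists b; split=> // x; split=> [h|h].
  apply: contraLR h; rewrite -atomC // => /(bool_endo_mono hg) hbx.
  by have := le_trans hab hbx; rewrite hg.2 atomC.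
exact: le_trans hab (bool_endo_mono hg h).
Qed.

Lemma nonatom_part (b : T) : b != \bot -> ~ atom b ->
  exists y, [/\ y <= b, y <> \bot & y <> b].
Proof.
move=> hb0 hna; apply: NNPP => hn; apply: hna; split=> // y hyb.
case: (classic (y = \bot)) => [|hy0]; first by left.
case: (classic (y = b)) => [|hyb']; first by right.
by case: hn; exists y.
Qed.

Section CompleteUltrafilter.
Variable F : T -> Prop.
Hypothesis F_meet : forall x y, F (x `&` y) <-> F x /\ F y.
Hypothesis F_compl : forall x, F (~` x) <-> ~ F x.
Hypothesis F_glb : forall Y p, is_glb Y p -> (forall y, Y y -> F y) -> F p.

Lemma ultrafilter_bot : ~ F \bot.
Proof.
move=> Fb; have /F_meet [_ /F_compl nFb] : F (\bot `&` ~` \bot) by rewrite meetxC.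
exact: nFb Fb.
Qed.

(* Otherwise the complements of the non-members would have meet \bot. *)
Lemma complete_ultrafilter_atom : exists a, atom a /\ F a.
Proof.
apply: NNPP => hna.
pose Y w := exists z, ~ F z /\ w = ~` z.
suff hY : is_glb Y \bot.
  by apply: ultrafilter_bot; apply: (F_glb hY) => _ [z [hz ->]]; apply/F_compl.
split=> [w _|b hb]; first exact: le0x.
have small z : ~ F z -> z <= b -> z = \bot.
  move=> hz hzb; have := le_trans hzb (hb _ (ex_intro _ z (conj hz erefl))).
  by rewrite -disj_leC meetxx => /eqP.
have [Fb|nFb] := classic (F b); last by rewrite (small b nFb).
have hb0 : b != \bot by apply: contraPneq ultrafilter_bot => <-.
have [y [hyb hy0 hyb']] :=
  nonatom_part hb0 (fun hab => hna (ex_intro _ b (conj hab Fb))).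
have [Fy|nFy] := classic (F y); last by case: hy0; apply: small.
have [Fby|nFby] := classic (F (b `&` ~` y)).
  case: ultrafilter_bot; rewrite -(meetxC y) -{1}(meet_idPl hyb) -meetA.
  by apply/F_meet.
case: hyb'; apply/le_anti; rewrite hyb /= -[y]complK -disj_leC.
by apply/eqP/small=> //; apply: leIl.
Qed.

End CompleteUltrafilter.
End BooleanAlgebra.

Section TermOperations.
Local Open Scope order_scope.
Variables (n : nat) (d : Order.disp_t) (T : ctbDistrLatticeType d).
Variables (sub swp : 'I_n -> 'I_n -> T -> T).
Hypothesis hSA : SA_axioms sub swp.

Lemma eval_cat (t1 t2 : word n) x :
  eval_word sub swp (t1 ++ t2) x = eval_word sub swp t1 (eval_word sub swp t2 x).
Proof. by elim: t1 => //= l t ->. Qed.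

Lemma eval_bool_endo (t : word n) : wf_word t -> bool_endo (eval_word sub swp t).
Proof.
elim: t => [_|[[b i] j] t IH /wf_cons hw]; first by split.
have [[s1 s2] [w1 w2]] := hSA.1 i j hw.1.
have [e1 e2] := IH hw.2.
by case: b {hw}; split=> /= *; rewrite ?e1 ?e2 ?s1 ?s2 ?w1 ?w2.
Qed.

Lemma s_tau_bool_endo tau : bool_endo (s_tau sub swp tau).
Proof. exact: eval_bool_endo (word_for_spec tau).1. Qed.

Lemma s_tau_word tau (t : word n) x :
  wf_word t -> hat t =1 tau -> s_tau sub swp tau x = eval_word sub swp t x.
Proof.
have [hw hh] := word_for_spec tau.
by move=> ht htau; apply: hSA.2 => // k; rewrite hh htau.
Qed.

Lemma s_tau_id x : s_tau sub swp id x = x.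
Proof. exact: (@s_tau_word id [::]). Qed.

Lemma s_tau_letter tau (l : letter n) x : l.1.2 != l.2 ->
  s_tau sub swp tau (letter_op sub swp l x) = s_tau sub swp (tau \o letter_map l) x.
Proof.
have [hw hh] := word_for_spec tau.
move=> hl; rewrite [RHS](@s_tau_word _ (word_for tau ++ [:: l])) ?eval_cat //.
  by apply: wf_cat => // l'; rewrite inE => /eqP ->.
by move=> k; rewrite hat_cat hh.
Qed.

End TermOperations.

Section Representation.
Local Open Scope order_scope.
Variables (n : nat) (d : Order.disp_t) (T : ctbDistrLatticeType d).
Variables (sub swp : 'I_n -> 'I_n -> T -> T).
Hypothesis hSA : SA_axioms sub swp.
Variable i0 : 'I_n.

Definition rep_dom (q : 'I_n -> T * 'I_n) : Prop :=
  atom (q i0).1 /\ forall k, (q k).1 = (q i0).1.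

Definition rep_map (x : T) (q : 'I_n -> T * 'I_n) : Prop :=
  rep_dom q /\ (q i0).1 <= s_tau sub swp (fun k => (q k).2) x.

Lemma rep_dom_comp (g : 'I_n -> 'I_n) q :
  rep_dom q -> rep_dom (q \o g) /\ (q (g i0)).1 = (q i0).1.
Proof. by move=> [h1 h2]; rewrite /rep_dom /= !h2. Qed.

Lemma rep_dom_dipermutable : dipermutable rep_dom.
Proof. by move=> q hq i j _; split; apply: (rep_dom_comp _ hq).1. Qed.

Lemma rep_map_meet x y q : rep_map (x `&` y) q <-> rep_map x q /\ rep_map y q.
Proof.
rewrite /rep_map (s_tau_bool_endo hSA _).1 lexI.
by split=> [[h /andP[]]|[[h1 ->] [_ ->]]].
Qed.

Lemma rep_map_compl x q : rep_map (~` x) q <-> rep_dom q /\ ~ rep_map x q.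
Proof.
rewrite /rep_map (s_tau_bool_endo hSA _).2.
split=> [[hq]|[hq h]]; rewrite (atomC _ hq.1).
  by move/negP=> h; split=> // -[].
by split=> //; apply/negP=> h'; apply: h.
Qed.

Lemma rep_map_letter (l : letter n) x q : l.1.2 != l.2 ->
  rep_map (letter_op sub swp l x) q <->
  rep_dom q /\ rep_map x (fun k => q (letter_map l k)).
Proof.
move=> hl; rewrite /rep_map s_tau_letter //.
have e := rep_dom_comp (letter_map l).
by split=> [[hq h]|[hq [_ h]]]; have [? he] := e q hq; rewrite ?he in h *.
Qed.

(* Injectivity: an atom below x `&` ~` y witnesses a point of f x outside f y. *)
Lemma rep_map_le : atomic T ->
  forall x y, (forall q, rep_map x q -> rep_map y q) -> x <= y.
Proof.
move=> hatm x y hxy; apply: NNPP => hn.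
have hne : x `&` ~` y != \bot.
  by apply/negP => /eqP h0; apply: hn; rewrite -[y]complK -disj_leC h0.
have [a [ha]] := hatm _ hne; rewrite lexI atomC // => /andP [hax /negP]; apply.
have /hxy [_] : rep_map x (fun k => (a, k)) by split; rewrite //= s_tau_id.
by rewrite /= s_tau_id.
Qed.

Lemma rep_map_glb : (forall tau, atoms_sum_one sub swp tau) ->
  forall (Y : T -> Prop) p, is_glb Y p ->
  forall q, rep_map p q <-> rep_dom q /\ (forall y, Y y -> rep_map y q).
Proof.
move=> hsum Y p [hlb hglb] q; rewrite /rep_map; split=> [[hq h]|[hq hall]].
  split=> // y hy; split=> //.
  exact: le_trans h (bool_endo_mono (s_tau_bool_endo hSA _) (hlb y hy)).
split=> //.
have [b [hb hbx]] :=
  atom_preimage (s_tau_bool_endo hSA (fun k => (q k).2)) (hsum _) hq.1.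
by apply/hbx; apply: hglb => y /hall [_ /hbx].
Qed.

Lemma rep_map_complete : atomic T -> (forall tau, atoms_sum_one sub swp tau) ->
  complete_rep sub swp rep_dom rep_map.
Proof.
move=> hatm hsum.
refine (conj _ (conj _ (conj _ (conj _ (conj _ (conj _ _)))))).
- by move=> x q [].
- exact: rep_map_meet.
- exact: rep_map_compl.
- by move=> i j hij x q; apply: (@rep_map_letter (false, i, j)).
- by move=> i j hij x q; apply: (@rep_map_letter (true, i, j)).
- by move=> x y hxy; apply: le_anti; rewrite !rep_map_le // => q /hxy.
- exact: rep_map_glb.
Qed.

End Representation.

Section CompleteRepresentation.
Local Open Scope order_scope.
Variables (n : nat) (d : Order.disp_t) (T : ctbDistrLatticeType d).
Variables (sub swp : 'I_n -> 'I_n -> T -> T).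
Variables (U : Type) (D : ('I_n -> U) -> Prop) (f : T -> ('I_n -> U) -> Prop).
Hypothesis hdp : dipermutable D.
Hypothesis hcr : complete_rep sub swp D f.

Lemma f_D x q : f x q -> D q. Proof. by case: hcr => h _; apply: h. Qed.
Lemma f_I x y q : f (x `&` y) q <-> f x q /\ f y q.
Proof. by case: hcr => _ [h _]. Qed.
Lemma f_C x q : f (~` x) q <-> D q /\ ~ f x q.
Proof. by case: hcr => _ [_ [h _]]. Qed.
Lemma f_inj x y : (forall q, f x q <-> f y q) -> x = y.
Proof. by case: hcr => _ [_ [_ [_ [_ [h _]]]]]; apply: h. Qed.
Lemma f_glb Y p : is_glb Y p -> forall q, f p q <-> D q /\ (forall y, Y y -> f y q).
Proof. by case: hcr => _ [_ [_ [_ [_ [_ h]]]]]; apply: h. Qed.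

Lemma f_letter (l : letter n) x q : l.1.2 != l.2 ->
  f (letter_op sub swp l x) q <-> D q /\ f x (fun k => q (letter_map l k)).
Proof.
case: l => [[b i] j] /= hij; case: hcr => _ [_ [_ [hs [hw _]]]].
by case: b; [apply: hw|apply: hs].
Qed.

Lemma D_letter (l : letter n) q :
  l.1.2 != l.2 -> D q -> D (fun k => q (letter_map l k)).
Proof. by case: l => [[[] i] j] /= hij /hdp /(_ _ _ hij) []. Qed.

Lemma D_hat (t : word n) q : wf_word t -> D q -> D (fun k => q (hat t k)).
Proof.
elim: t q => [//|l t IH] q /wf_cons hw hq /=.
exact: (IH (fun k => q (letter_map l k)) hw.2 (D_letter hw.1 hq)).
Qed.

Lemma f_eval (t : word n) x q : wf_word t ->
  f (eval_word sub swp t x) q <-> D q /\ f x (fun k => q (hat t k)).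
Proof.
elim: t q => [q _|l t IH q /wf_cons hw] /=.
  by split=> [h|[]//]; split=> //; apply: f_D h.
rewrite (f_letter _ _ hw.1) (IH _ hw.2); split=> [[? []] //|[hq h]].
by split=> //; split=> //; apply: D_letter hw.1 hq.
Qed.

Lemma f_bot q : ~ f \bot q.
Proof.
move=> fb; have /f_I [_ /f_C [_ nfb]] : f (\bot `&` ~` \bot) q by rewrite meetxC.
exact: nfb fb.
Qed.

Lemma f_mono y z q : y <= z -> f y q -> f z q.
Proof. by move=> /meet_idPl <- /f_I []. Qed.

(* For a point q of D, the elements containing q form a complete ultrafilter. *)
Lemma point_atom q : D q -> exists a, atom a /\ f a q.
Proof.
move=> hq; apply: complete_ultrafilter_atom => [x y|x|Y p hY hall].
- exact: f_I.
- by rewrite f_C; split=> [[]|].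
- by apply/(f_glb hY).
Qed.

Lemma rep_atomic : atomic T.
Proof.
move=> x hx.
have [q hq] : exists q, f x q.
  apply: NNPP => hn; case/negP: hx; apply/eqP; apply: f_inj => q.
  by split=> [h|/f_bot //]; case: hn; exists q.
have [a [ha hfa]] := point_atom (f_D hq).
exists a; split=> //.
case: ha => ha0 /(_ (a `&` x) (leIl _ _)) [h0|<-]; last exact: leIr.
by case: (@f_bot q); rewrite -h0; apply/f_I.
Qed.

(* The atom containing q o tau is sent by s_tau above any upper bound of the sum. *)
Lemma rep_atoms_sum_one tau : atoms_sum_one sub swp tau.
Proof.
split=> [y _|b hb]; first exact: lex1.
suff -> : b = \top by [].
apply: f_inj => q; split=> [/f_D hq|/f_D hq].
  by rewrite -compl0; apply/f_C; split=> // /f_bot.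
have [hw hh] := word_for_spec tau.
have [a [ha hfa]] := point_atom (D_hat hw hq).
by apply: f_mono (hb _ (ex_intro _ a (conj ha erefl))) _; apply/f_eval.
Qed.

End CompleteRepresentation.

Theorem mainTheorem11 (n : nat) (hn : 2 <= n) (d : Order.disp_t)
  (T : ctbDistrLatticeType d) (sub swp : 'I_n -> 'I_n -> T -> T)
  (hSA : SA_axioms sub swp) :
  ((atomic T /\ forall tau : 'I_n -> 'I_n, atoms_sum_one sub swp tau) ->
     completely_representable sub swp) /\
  (completely_representable sub swp ->
     atomic T /\ forall tau : 'I_n -> 'I_n, atoms_sum_one sub swp tau).
Proof.
split=> [[hatm hsum]|[U [D [f [hdp hcr]]]]].
  pose i0 : 'I_n := Ordinal (ltnW hn).
  exists (T * 'I_n)%type, (rep_dom i0), (rep_map sub swp i0); split.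
    exact: rep_dom_dipermutable.
  exact: rep_map_complete.
split; first exact: rep_atomic hcr.
by move=> tau; apply: rep_atoms_sum_one hdp hcr tau.
Qed.
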